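(* Let $\mathcal{G}$ be a network of type $\mathcal{C}^1$ with exactly two stubborn agents $s_1,s_2$ and global communicator $m$, and let $\bar{G}_s$ be the signal flow graph derived from $\mathcal{G}$ as described in the context. Then, in $\bar{G}_s$: (1) for $i\in\{1,2\}$ and any node $e$, the sum of the path gains of all direct paths from $S_i$ to $e$ is at most $\dfrac{\beta_{s_i}(1-g_{e,e})}{1-g_{s_i,s_i}}$, and equality holds only when every simple path from $m$ to $e$ passes through $s_i$; (2) for any nodes $e,f$, the sum of the path gains of all direct paths from $e$ to $f$ is at most $\dfrac{1-g_{f,f}}{1-g_{e,e}}$, and equality holds only if every simple path from $m$ to $f$ passes through $e$.
   Context: Let $\mathcal{G}=(\mathcal{V},\mathcal{E})$, $\mathcal{V}=\{1,\dots,n\}$, be a directed graph, where an edge $(i,j)$ means information flows from $i$ to $j$. Its weighted adjacency matrix $W=[w_{ij}]$ is row-stochastic with $w_{ij}>0$ iff $(j,i)\in\mathcal{E}$ (self-loops allowed). Opinions follow the Friedkin–Johnsen model $\mathbf{x}(k+1)=(I-\beta)W\mathbf{x}(k)+\beta\mathbf{x}(0)$, $\beta=\mathrm{diag}(\beta_1,\dots,\beta_n)$, $\beta_i\in[0,1]$; exactly two agents $s_1,s_2$ are stubborn ($\beta_i>0$), with $\beta_{s_1},\beta_{s_2}\in(0,1)$. Type $\mathcal{C}^1$: $\mathcal{G}$ is strongly connected and some node $m$ lies on every cycle other than self-loops (a global communicator). A direct path is a path that does not pass through $m$. Signal flow graph: $G_s$ has nodes $1,\dots,n$ (node $i$ associated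 with the final opinion $x_i^*$ of agent $i$), two source nodes $S_1,S_2$ (initial opinions of $s_1,s_2$) and a sink $O$ (average final opinion), built from $\mathbf{x}^*=(I_n-\beta)W\mathbf{x}^*+\beta\mathbf{x}(0)$, $\bar{x}=\mathbb{1}_n^T\mathbf{x}^*/n$: for $i,j\in\{1,\dots,n\}$ there is a branch $(j,i)$ with gain $g_{i,j}=(1-\beta_i)w_{ij}$ whenever this is nonzero (so $g_{k,k}=(1-\beta_k)w_{kk}$ is the self-loop gain of $k$); there is a branch $(S_i,s_i)$ with gain $\beta_{s_i}$; and a branch $(j,O)$ with gain $1/n$ for each $j$. The graph $\bar{G}_s$ is obtained from $G_s$ by deleting every self-loop at a node $k$ and multiplying the gain of every outgoing branch of $k$ by $1/(1-g_{k,k})$. The gain of a path is the product of its branch gains (in $\bar{G}_s$); $g_{e,e}$ denotes the self-loop gain of $e$ in $G_s$. *)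

From mathcomp Require Import all_boot all_order all_algebra.
Set Implicit Arguments. Unset Strict Implicit. Unset Printing Implicit Defensive.
Import Order.TTheory GRing.Theory Num.Theory.
Local Open Scope ring_scope.

Definition row_stochastic (R : numDomainType) (n : nat) (W : 'M[R]_n) : Prop :=
  (forall i j, 0 <= W i j) /\ (forall i, \sum_(j < n) W i j = 1).

(* edge (j,i) of G, i.e. information flows from j to i, iff w_ij > 0 *)
Definition edgeG (R : numDomainType) (n : nat) (W : 'M[R]_n) : rel 'I_n :=
  fun j i => 0 < W i j.

Definition strongly_connected (R : numDomainType) (n : nat) (W : 'M[R]_n) : Prop :=
  forall i j : 'I_n, connect (edgeG W) i j.

(* m lies on every directed cycle of G other than self-loops
   (cycles are sequences of >= 2 distinct nodes, closed by an edge) *)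
Definition global_communicator (R : numDomainType) (n : nat) (W : 'M[R]_n)
    (m : 'I_n) : Prop :=
  forall c : seq 'I_n, (2 <= size c)%N -> uniq c -> cycle (edgeG W) c -> m \in c.

(* nodes: inl i = agent node i, inr (Some false) = S_1, inr (Some true) = S_2,
   inr None = sink O *)
Definition node (n : nat) : finType := ('I_n + option bool)%type.
Definition Ag (n : nat) (i : 'I_n) : node n := inl i.
Definition Src (n : nat) (b : bool) : node n := inr (Some b).
Definition Out (n : nat) : node n := inr None.

Definition stub (n : nat) (s1 s2 : 'I_n) (b : bool) : 'I_n := if b then s2 else s1.

(* gs x y = gain of the branch from x to y in G_s (0 if there is no branch).
   In the paper's notation g_{i,j} = gs (Ag j) (Ag i) = (1 - beta_i) w_ij. *)
Definition gs (R : numFieldType) (n : nat) (W : 'M[R]_n) (beta : 'I_n -> R)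
    (s1 s2 : 'I_n) (x y : node n) : R :=
  match x, y with
  | inl j, inl i => (1 - beta i) * W i j
  | inr (Some b), inl i => if i == stub s1 s2 b then beta i else 0
  | inl j, inr None => n%:R^-1
  | _, _ => 0
  end.

Definition brbar (R : numFieldType) (n : nat) (W : 'M[R]_n) (beta : 'I_n -> R)
    (s1 s2 : 'I_n) : rel (node n) :=
  fun x y => (x != y) && (gs W beta s1 s2 x y != 0).

Definition gbar (R : numFieldType) (n : nat) (W : 'M[R]_n) (beta : 'I_n -> R)
    (s1 s2 : 'I_n) (x y : node n) : R :=
  if x == y then 0 else gs W beta s1 s2 x y / (1 - gs W beta s1 s2 x x).

Fixpoint pgain (R : numFieldType) (T : Type) (h : T -> T -> R) (x : T) (s : seq T) : R :=
  match s with
  | [::] => 1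
  | y :: s' => h x y * pgain h y s'
  end.

Definition sfg_path (T : eqType) (br : rel T) (a b : T) (p : seq T) : bool :=
  match p with
  | x :: q => [&& x == a, q != [::], path br x q, last x q == b & uniq p]
  | [::] => false
  end.

Definition direct_path (R : numFieldType) (n : nat) (W : 'M[R]_n) (beta : 'I_n -> R)
    (s1 s2 m : 'I_n) (a b : node n) (p : seq (node n)) : bool :=
  sfg_path (brbar W beta s1 s2) a b p && (Ag m \notin p).

Definition path_gain (R : numFieldType) (n : nat) (W : 'M[R]_n) (beta : 'I_n -> R)
    (s1 s2 : 'I_n) (p : seq (node n)) : R :=
  match p with
  | x :: q => pgain (gbar W beta s1 s2) x q
  | [::] => 0
  end.

(* sum of the path gains of all direct paths from a to b in Gbar_s
   (paths are uniq, hence of size <= #|node n|, so all are enumerated) *)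
Definition direct_sum (R : numFieldType) (n : nat) (W : 'M[R]_n) (beta : 'I_n -> R)
    (s1 s2 m : 'I_n) (a b : node n) : R :=
  \sum_(k < #|{: node n}|)
    \sum_(t : k.+1.-tuple (node n) | direct_path W beta s1 s2 m a b t)
      path_gain W beta s1 s2 t.

(* Sums over simple paths decompose along their last branch: the paths from e to f
   avoiding A contribute [e = f] plus sum_u (paths e -> u avoiding f |: A) * gbar(u, f).
   In G_s the gains entering any node add up to at most 1, so c x := 1 - g_{x,x}
   satisfies sum_u c u * gbar(u, f) <= c f, and induction on the path length bounds
   the direct sum from e to f by c f / c e.  If some path from m (avoided by direct
   paths) reaches f without meeting e, induction along that path makes the bound
   strict: its last branch j -> f has positive gain and, inductively, the sum up to j
   is already strictly below c j / c e.  A source S_i has a single branch, of gain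
   beta_{s_i}, into s_i, which yields the factor beta_{s_i} / c s_i in part (1). *)

From mathcomp Require Import all_boot all_order all_algebra.
From mathcomp Require Import lra.
Import Order.TTheory GRing.Theory Num.Theory.
Set Implicit Arguments. Unset Strict Implicit. Unset Printing Implicit Defensive.
Local Open Scope ring_scope.

Section RouteSums.
Variables (R : numFieldType) (T : finType) (h : T -> T -> R).

Definition seq_gain (s : seq T) : R :=
  match s with x :: q => pgain h x q | [::] => 0 end.

(* No branch condition is imposed: a sequence that is not a path gets gain 0
   under [normalized_gain] (lemma [seq_gain_non_path]). *)
Definition simple_route (A : {set T}) (a b : T) (s : seq T) : bool :=
  match s with
  | x :: q => [&& x == a, last x q == b, uniq (x :: q) & all (fun y => y \notin A) (x :: q)]
  | [::] => false
  end.

Arguments simple_route : simpl never.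

Definition route_sum_len (A : {set T}) (a b : T) (k : nat) : R :=
  \sum_(t : k.+1.-tuple T | simple_route A a b t) seq_gain t.

Definition route_sum (A : {set T}) (a b : T) (N : nat) : R :=
  \sum_(k < N) route_sum_len A a b k.

Lemma pgain_rcons x s y : pgain h x (rcons s y) = pgain h x s * h (last x s) y.
Proof.
by elim: s x => [|z s IH] x /=; rewrite ?mulr1 ?mul1r // IH mulrA.
Qed.

Lemma all_notin_setU1 (b : T) (A : {set T}) s :
  all (fun y => y \notin b |: A) s = (b \notin s) && all (fun y => y \notin A) s.
Proof.
elim: s => [|y s IH] //=; rewrite IH in_setU1 in_cons negb_or (eq_sym b).
by case: (y == b); case: (y \in A); case: (b \in s); case: all.
Qed.

Lemma simple_route_mem (A : {set T}) (a b : T) s :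
  (a \in A) || (b \in A) -> simple_route A a b s = false.
Proof.
case: s => [|x q] //; rewrite /simple_route => aAbA; apply/negP.
case/and4P => /eqP ax /eqP bx _ /allP notinA; subst a b.
case/orP: aAbA => [xA | lA]; [have := notinA x | have := notinA (last x q)];
  by rewrite ?mem_head ?mem_last ?xA ?lA => /(_ isT).
Qed.

Lemma route_sum_len0 (A : {set T}) (a b : T) :
  route_sum_len A a b 0 = if (a == b) && (a \notin A) then 1 else 0.
Proof.
rewrite /route_sum_len (reindex_onto (fun x : T => [tuple x]) (fun t => thead t)); last first.
  by move=> t _; apply: val_inj; case: t => [[|x [|y q]] //].
case: ifP => [/andP [/eqP <- aA] | abA].
  rewrite (eq_bigl (pred1 a)) ?big_pred1_eq // => x.
  rewrite theadE eqxx andbT /simple_route /=.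
  by case: (eqVneq x a) => [->|]; rewrite /= ?aA ?andbF ?andbT.
rewrite big_pred0 // => x; rewrite theadE eqxx andbT /simple_route /=.
by apply/negP => /and4P [/eqP xa /eqP xb xA _]; rewrite -xa -xb eqxx xA in abA.
Qed.

Lemma simple_route_rcons (A : {set T}) (a b y : T) r :
  simple_route A a b (y :: rcons r b)
  = (b \notin A) && simple_route (b |: A) a (last y r) (y :: r).
Proof.
rewrite /simple_route last_rcons eqxx -rcons_cons rcons_uniq all_rcons all_notin_setU1.
by case: (y == a); case: (b \in A); case: (b \in y :: r); case: uniq; case: all;
  rewrite ?eqxx.
Qed.

Lemma route_sum_lenS (A : {set T}) (a b : T) k :
  route_sum_len A a b k.+1
  = if b \in A then 0 else \sum_u route_sum_len (b |: A) a u k * h u b.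
Proof.
rewrite /route_sum_len (reindex_onto (fun t : k.+1.-tuple T => [tuple of rcons t b])
   (fun t : k.+2.-tuple T => [tuple of belast (thead t) (behead t)])); last first.
  move=> [[|x q] //= q_size]; rewrite /simple_route => /and4P [_ /eqP <- _ _].
  by apply: val_inj; rewrite /= -lastI.
case: ifP => bA; first by rewrite big_pred0 // => t; rewrite simple_route_mem ?bA ?orbT.
under [RHS]eq_bigr do rewrite big_distrl big_mkcond /=.
rewrite exchange_big big_mkcond /=; apply: eq_bigr => -[[|y r] //= r_size].
rewrite (bigD1 (last y r)) //= big1 ?addr0; last first.
  by move=> u ne_u; rewrite /simple_route /= (eq_sym (last y r)) (negbTE ne_u) andbF.
rewrite simple_route_rcons bA /= pgain_rcons.
move=> _; rewrite [X in _ && X](_ : _ = true) ?andbT //.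
by apply/eqP/val_inj; rewrite /= belast_rcons.
Qed.

Lemma route_sum_len_first (A : {set T}) (a0 s0 b : T) (be : R) k :
  (forall y, h a0 y = if y == s0 then be else 0) -> a0 \notin A ->
  route_sum_len A a0 b k.+1 = be * route_sum_len (a0 |: A) s0 b k.
Proof.
move=> h_a0 a0A.
rewrite /route_sum_len (reindex_onto (fun t : k.+1.-tuple T => [tuple of a0 :: t])
   (fun t : k.+2.-tuple T => [tuple of behead t])); last first.
  by move=> [[|x q] //= q_size]; rewrite /simple_route /= => /andP [/eqP -> _]; apply: val_inj.
rewrite mulr_sumr big_mkcond [RHS]big_mkcond; apply: eq_bigr => -[[|y r] // r_size].
rewrite [X in _ && X](_ : _ = true) ?andbT; last exact/eqP/val_inj.
rewrite /simple_route /= h_a0 in_setU1 !in_cons negb_or.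
case: (eqVneq y s0) => [->|_]; last by rewrite mul0r; case: ifP.
rewrite eqxx /= (negbTE a0A) all_notin_setU1 (eq_sym s0 a0).
by case: (a0 == s0); case: (s0 \in A); case: (a0 \in r); case: (s0 \in r); case: uniq;
  case: all; case: (last _ _ == b); rewrite /= ?mulr0 ?mul0r.
Qed.

Lemma route_sum0 (A : {set T}) (a b : T) : route_sum A a b 0 = 0.
Proof. by rewrite /route_sum big_ord0. Qed.

Lemma route_sum_mem (A : {set T}) (a b : T) N :
  (a \in A) || (b \in A) -> route_sum A a b N = 0.
Proof.
move=> aAbA; rewrite /route_sum big1 // => k _.
by rewrite /route_sum_len big_pred0 // => t; apply: simple_route_mem.
Qed.

Lemma route_sumS (A : {set T}) (a b : T) N :
  route_sum A a b N.+1 = (if (a == b) && (a \notin A) then 1 else 0) +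
    (if b \in A then 0 else \sum_u route_sum (b |: A) a u N * h u b).
Proof.
rewrite /route_sum big_ord_recl route_sum_len0; congr (_ + _).
under eq_bigr do rewrite route_sum_lenS.
case: ifP => _; first by rewrite big1.
by rewrite exchange_big; apply: eq_bigr => u _; rewrite big_distrl.
Qed.

Lemma route_sum_first (A : {set T}) (a0 s0 b : T) (be : R) N :
  (forall y, h a0 y = if y == s0 then be else 0) -> a0 \notin A -> a0 != b ->
  route_sum A a0 b N.+1 = be * route_sum (a0 |: A) s0 b N.
Proof.
move=> h_a0 a0A a0b.
rewrite /route_sum big_ord_recl route_sum_len0 (negbTE a0b) add0r mulr_sumr.
by apply: eq_bigr => k _; rewrite (route_sum_len_first _ _ h_a0 a0A).
Qed.

End RouteSums.

Lemma sfg_path_loop (T : eqType) (br : rel T) (a : T) (p : seq T) :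
  sfg_path br a a p = false.
Proof.
case: p => [|x [|y q]] /=; rewrite ?andbF //.
apply/negP => /and4P [/eqP xa _ /eqP la /andP [x_fresh _]].
by move: x_fresh; rewrite xa -la mem_last.
Qed.

Section NormalizedGains.
Variables (R : realFieldType) (T : finType) (g : T -> T -> R).

Definition branch : rel T := fun x y => (x != y) && (g x y != 0).

Definition normalized_gain (x y : T) : R :=
  if x == y then 0 else g x y / (1 - g x x).

Local Notation h := normalized_gain.

Lemma seq_gain_non_path (x : T) q :
  uniq (x :: q) -> ~~ path branch x q -> pgain h x q = 0.
Proof.
elim: q x => [|y q IH] x //= /andP [x_fresh q_uniq].
rewrite negb_and => /orP [xy_nbranch | q_npath]; last by rewrite IH ?mulr0.
have xy : x != y by apply: contraNneq x_fresh => ->; rewrite mem_head.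
by move: xy_nbranch; rewrite /branch xy negbK /h (negbTE xy) => /eqP ->; rewrite !mul0r.
Qed.

Lemma sfg_path_avoiding_route (x a b : T) (p : seq T) : a != b ->
  (if sfg_path branch a b p && (x \notin p) then seq_gain h p else 0)
  = (if simple_route [set x] a b p then seq_gain h p else 0).
Proof.
case: p => [|y q] // ab; rewrite /sfg_path /simple_route.
have -> : all (fun z => z \notin [set x]) (y :: q) = (x \notin y :: q).
  by elim: (y :: q) => [|z s IH] //=; rewrite IH in_set1 in_cons negb_or eq_sym.
case: (y =P a) => [ya | _] //; case: (last y q =P b) => [la | _]; last by rewrite !andbF.
have -> : q != [::] by case: q la => // la; rewrite -la -ya eqxx in ab.
case yq: (uniq (y :: q)); case: (x \in y :: q); rewrite ?andbF ?andbT //=.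
by case: ifP => // /negbT /(seq_gain_non_path yq) ->.
Qed.

Lemma sum_sfg_paths_avoiding (x a b : T) N : a != b ->
  \sum_(k < N) \sum_(t : k.+1.-tuple T | sfg_path branch a b t && (x \notin t))
     seq_gain h t
  = route_sum h [set x] a b N.
Proof.
move=> ab; apply: eq_bigr => k _; rewrite /route_sum_len big_mkcond [RHS]big_mkcond.
by apply: eq_bigr => t _; apply: sfg_path_avoiding_route.
Qed.

Hypothesis g_ge0 : forall x y, 0 <= g x y.
Hypothesis g_diag_lt1 : forall x, g x x < 1.
Hypothesis g_in_sum_le1 : forall y, \sum_x g x y <= 1.

Lemma one_sub_diag_gt0 x : 0 < 1 - g x x.
Proof. by rewrite subr_gt0. Qed.

Lemma normalized_gain_ge0 x y : 0 <= h x y.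
Proof.
by rewrite /h; case: ifP => // _; rewrite divr_ge0 // ltW ?one_sub_diag_gt0.
Qed.

Lemma normalized_gain_gt0 x y : branch x y -> 0 < h x y.
Proof.
case/andP => /negbTE xy gxy; rewrite /h xy divr_gt0 ?one_sub_diag_gt0 //.
by rewrite lt0r gxy g_ge0.
Qed.

(* (1 - g u u) * h u f = g u f for u <> f, so the weighted sum is the off-diagonal
   column sum of g at f. *)
Lemma normalized_gain_weighted_sum e f :
  \sum_u (1 - g u u) / (1 - g e e) * h u f <= (1 - g f f) / (1 - g e e).
Proof.
under eq_bigr do rewrite mulrAC; rewrite -mulr_suml.
apply: ler_wpM2r; first by rewrite invr_ge0 ltW ?one_sub_diag_gt0.
rewrite (bigD1 f) //= /h eqxx mulr0 add0r.
under eq_bigr => u /negbTE uf do rewrite uf mulrC divfK ?gt_eqF ?one_sub_diag_gt0 //.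
by have := g_in_sum_le1 f; rewrite (bigD1 f) //=; lra.
Qed.

Lemma gain_ratio_gt0 e f : 0 < (1 - g f f) / (1 - g e e).
Proof. by rewrite divr_gt0 ?one_sub_diag_gt0. Qed.

Lemma route_sum_le (A : {set T}) e f N :
  route_sum h A e f N <= (1 - g f f) / (1 - g e e).
Proof.
elim: N A f => [|N IH] A f; first by rewrite route_sum0; exact/ltW/gain_ratio_gt0.
rewrite route_sumS; have [<- | ef] /= := eqVneq e f.
  rewrite divff ?gt_eqF ?one_sub_diag_gt0 // big1 => [|u _]; last first.
    by rewrite route_sum_mem ?setU11 ?mul0r.
  by case: ifP; case: ifP; rewrite ?addr0 ?add0r ?ler01.
rewrite add0r; case: ifP => _; first exact/ltW/gain_ratio_gt0.
apply: le_trans (normalized_gain_weighted_sum e f).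
by apply: ler_sum => u _; rewrite ler_wpM2r ?normalized_gain_ge0.
Qed.

Lemma route_sum_lt (A : {set T}) e x w ws N :
  e \notin w :: ws -> path branch w ws -> x \in A -> x \in w :: ws ->
  route_sum h A e (last w ws) N < (1 - g (last w ws) (last w ws)) / (1 - g e e).
Proof.
elim/last_ind: ws A N => [|ws f IH] A N e_fresh w_path xA.
  by rewrite mem_seq1 => /eqP <-; rewrite route_sum_mem ?xA ?orbT ?gain_ratio_gt0.
rewrite last_rcons -rcons_cons mem_rcons in_cons => x_path.
case: N => [|N]; first by rewrite route_sum0 gain_ratio_gt0.
have ef : e != f by apply: contraNneq e_fresh => ->; rewrite -rcons_cons mem_rcons mem_head.
rewrite route_sumS (negbTE ef) add0r.
case: ifP => [_ | fA]; first exact: gain_ratio_gt0.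
move: w_path; rewrite rcons_path => /andP [w_path jf].
set j := last w ws in jf *.
have IHj : route_sum h (f |: A) e j N < (1 - g j j) / (1 - g e e).
  have e_fresh' : e \notin w :: ws.
    by apply: contra e_fresh => e_in; rewrite -rcons_cons mem_rcons in_cons e_in orbT.
  have x_path' : x \in w :: ws by case/predU1P: x_path => // xf; rewrite xf fA in xA.
  by apply: IH e_fresh' w_path _ x_path'; rewrite in_setU1 xA orbT.
apply: lt_le_trans (normalized_gain_weighted_sum e f).
rewrite (bigD1 j) //= [X in _ < X](bigD1 j) //= ltr_leD //.
  by rewrite ltr_pM2r ?normalized_gain_gt0.
by apply: ler_sum => u _; rewrite ler_wpM2r ?normalized_gain_ge0 ?route_sum_le.
Qed.

Lemma route_sum_lt_sfg_path (A : {set T}) x a b p N :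
  sfg_path branch x b p -> x \in A -> a \notin p ->
  route_sum h A a b N < (1 - g b b) / (1 - g a a).
Proof.
case: p => [|w ws] //= /and5P [/eqP -> _ w_path /eqP <- _] xA a_fresh.
exact: route_sum_lt a_fresh w_path xA (mem_head _ _).
Qed.

End NormalizedGains.

Lemma connect_in_edge (T : finType) (e : rel T) x y :
  connect e x y -> x != y -> exists2 z, z != y & e z y.
Proof.
case/connectP => p + ->; elim: p x => [|z p IH] x /=; first by rewrite eqxx.
case/andP => xz z_path x_last; have [z_last | ] := eqVneq z (last z p); last exact: IH.
by rewrite -z_last in x_last *; exists x.
Qed.

Lemma strongly_connected_diag_lt1 (R : numDomainType) n (W : 'M[R]_n) i j :
  row_stochastic W -> strongly_connected W -> j != i -> W i i < 1.
Proof.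
move=> [W_ge0 W_sum1] W_sc ji; have [k ki W_ik_gt0] := connect_in_edge (W_sc j i) ji.
have := W_sum1 i; rewrite (bigD1 i) //= (bigD1 k) //= => <-.
by rewrite -subr_gt0 addrAC subrr add0r ltr_wpDr ?sumr_ge0.
Qed.

Section SignalFlowGraph.
Variables (R : realFieldType) (n : nat) (W : 'M[R]_n) (beta : 'I_n -> R) (s1 s2 m : 'I_n).
Hypothesis W_row_stochastic : row_stochastic W.
Hypothesis s1_neq_s2 : s1 != s2.
Hypothesis beta_ge0 : forall i, 0 <= beta i.
Hypothesis beta_lt1 : forall i, beta i < 1.
Hypothesis beta_stubborn : forall i, i != s1 -> i != s2 -> beta i = 0.
Hypothesis W_diag_lt1 : forall i, W i i < 1.

Local Notation g := (gs W beta s1 s2).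

Lemma sum_node (F : node n -> R) :
  \sum_u F u = \sum_i F (Ag i) + (F (Out n) + (F (Src n true) + F (Src n false))).
Proof.
rewrite big_sumType; congr (_ + _).
rewrite (bigD1 None) //= (bigD1 (Some true)) //= (bigD1 (Some false)) //= big_pred0 ?addr0 //.
by case=> [[]|].
Qed.

Lemma gs_ge0 x y : 0 <= g x y.
Proof.
have [W_ge0 _] := W_row_stochastic.
case: x y => [j|[b|]] [i|[c|]] //=; last by case: ifP.
  by rewrite mulr_ge0 // subr_ge0 ltW.
by rewrite invr_ge0 ler0n.
Qed.

Lemma gs_diag_lt1 x : g x x < 1.
Proof.
have [W_ge0 _] := W_row_stochastic.
case: x => [i|[b|]] /=; rewrite ?ltr01 //.
by have := beta_ge0 i; have := beta_lt1 i; have := W_ge0 i i; have := W_diag_lt1 i; nra.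
Qed.

Lemma gs_in_sum_le1 y : \sum_x g x y <= 1.
Proof.
have [_ W_sum1] := W_row_stochastic.
case: y => [i|[b|]]; rewrite sum_node /=.
- rewrite -mulr_sumr W_sum1 mulr1 add0r.
  have [-> | i_s2] := eqVneq i s2; first by rewrite eq_sym (negbTE s1_neq_s2); lra.
  have [-> | i_s1] := eqVneq i s1; first by lra.
  by rewrite beta_stubborn // !addr0 subr0.
- by rewrite big1 ?addr0 ?ler01.
- rewrite sumr_const card_ord !addr0 -[X in X <= 1]mulr_natr.
  by have [-> | n_neq0] := eqVneq (n%:R : R) 0; rewrite ?mulr0 ?ler01 ?mulVf.
Qed.

Lemma normalized_gain_src b y :
  normalized_gain g (Src n b) y = if y == Ag (stub s1 s2 b) then beta (stub s1 s2 b) else 0.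
Proof.
rewrite /normalized_gain; case: y => [i|[c|]] /=; rewrite ?mul0r; last 2 first.
- by case: ifP.
- by [].
rewrite subr0 invr1 mulr1.
have -> : (inl i == Ag (stub s1 s2 b) :> node n) = (i == stub s1 s2 b) by [].
by have [-> | ] := eqVneq i (stub s1 s2 b).
Qed.

Hypothesis beta_s1_gt0 : 0 < beta s1.
Hypothesis beta_s2_gt0 : 0 < beta s2.

Lemma direct_sum_route a b : a != b ->
  direct_sum W beta s1 s2 m a b
  = route_sum (normalized_gain g) [set Ag m] a b #|{: node n}|.
Proof. exact: sum_sfg_paths_avoiding. Qed.

Lemma direct_sum_loop a : direct_sum W beta s1 s2 m a a = 0.
Proof.
rewrite /direct_sum big1 // => k _.
by rewrite big_pred0 // => t; rewrite /direct_path sfg_path_loop.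
Qed.

Lemma direct_sum_from_source b e :
  let s := stub s1 s2 b in
  let bound := beta s * (1 - g (Ag e) (Ag e)) / (1 - g (Ag s) (Ag s)) in
  direct_sum W beta s1 s2 m (Src n b) (Ag e) <= bound /\
  (direct_sum W beta s1 s2 m (Src n b) (Ag e) = bound ->
   forall p, sfg_path (brbar W beta s1 s2) (Ag m) (Ag e) p -> Ag s \in p).
Proof.
move=> s bound; have beta_s_gt0 : 0 < beta s by rewrite /s; case: (b).
rewrite direct_sum_route //.
have [N ->] : exists N, #|{: node n}| = N.+1.
  by exists (n + #|{: bool}|); rewrite /node card_sum card_ord card_option addnS.
rewrite (route_sum_first _ (normalized_gain_src b)) ?in_set1 //.
have route_le := route_sum_le gs_ge0 gs_diag_lt1 gs_in_sum_le1.
rewrite /bound -mulrA; split; first by apply: ler_wpM2l; [exact: ltW | exact: route_le].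
move=> eq_bound p m_e_path; apply/negPn/negP => s_fresh.
have m_in : Ag m \in Src n b |: [set Ag m] by rewrite !inE eqxx orbT.
have := route_sum_lt_sfg_path gs_ge0 gs_diag_lt1 gs_in_sum_le1 N m_e_path m_in s_fresh.
by rewrite -(ltr_pM2l beta_s_gt0) eq_bound ltxx.
Qed.

Lemma direct_sum_between_agents e f :
  let bound := (1 - g (Ag f) (Ag f)) / (1 - g (Ag e) (Ag e)) in
  direct_sum W beta s1 s2 m (Ag e) (Ag f) <= bound /\
  (direct_sum W beta s1 s2 m (Ag e) (Ag f) = bound ->
   forall p, sfg_path (brbar W beta s1 s2) (Ag m) (Ag f) p -> Ag e \in p).
Proof.
have [<- | ef] := eqVneq e f; move=> bound.
  rewrite direct_sum_loop /bound divff ?gt_eqF ?(one_sub_diag_gt0 gs_diag_lt1) //.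
  by split=> [|/eqP]; rewrite ?ler01 // eq_sym oner_eq0.
rewrite direct_sum_route //; split.
  exact: route_sum_le gs_ge0 gs_diag_lt1 gs_in_sum_le1 _ _ _ _.
move=> eq_bound p m_f_path; apply/negPn/negP => e_fresh.
have := route_sum_lt_sfg_path gs_ge0 gs_diag_lt1 gs_in_sum_le1 #|{: node n}|
  m_f_path (set11 _) e_fresh.
by rewrite eq_bound ltxx.
Qed.

End SignalFlowGraph.

Theorem lemma3 (R : realFieldType) (n : nat) (W : 'M[R]_n) (beta : 'I_n -> R)
    (s1 s2 m : 'I_n) :
  row_stochastic W ->
  s1 != s2 ->
  0 < beta s1 < 1 -> 0 < beta s2 < 1 ->
  (forall i, i != s1 -> i != s2 -> beta i = 0) ->
  strongly_connected W ->
  global_communicator W m ->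
  (forall (b : bool) (e : 'I_n),
     let g := gs W beta s1 s2 in
     let bound := beta (stub s1 s2 b) * (1 - g (Ag e) (Ag e))
                  / (1 - g (Ag (stub s1 s2 b)) (Ag (stub s1 s2 b))) in
     direct_sum W beta s1 s2 m (Src n b) (Ag e) <= bound /\
     (direct_sum W beta s1 s2 m (Src n b) (Ag e) = bound ->
      forall p : seq (node n), sfg_path (brbar W beta s1 s2) (Ag m) (Ag e) p ->
        Ag (stub s1 s2 b) \in p)) /\
  (forall e f : 'I_n,
     let g := gs W beta s1 s2 in
     let bound := (1 - g (Ag f) (Ag f)) / (1 - g (Ag e) (Ag e)) in
     direct_sum W beta s1 s2 m (Ag e) (Ag f) <= bound /\
     (direct_sum W beta s1 s2 m (Ag e) (Ag f) = bound ->
      forall p : seq (node n), sfg_path (brbar W beta s1 s2) (Ag m) (Ag f) p ->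
        Ag e \in p)).
Proof.
move=> W_rs s12 /andP [beta_s1_gt0 beta_s1_lt1] /andP [beta_s2_gt0 beta_s2_lt1]
  beta_other W_sc _.
have beta_ge0 i : 0 <= beta i.
  have [-> | i_s1] := eqVneq i s1; first exact: ltW.
  by have [-> | i_s2] := eqVneq i s2; [exact: ltW | rewrite beta_other].
have beta_lt1 i : beta i < 1.
  have [-> | i_s1] := eqVneq i s1; first by [].
  by have [-> | i_s2] := eqVneq i s2; last rewrite beta_other ?ltr01.
have W_diag_lt1 i : W i i < 1.
  have [<- | s1_i] := eqVneq s1 i; last exact: strongly_connected_diag_lt1 W_rs W_sc s1_i.
  by apply: (strongly_connected_diag_lt1 (j := s2)); rewrite 1?eq_sym.
split=> [b e | e f].
  exact: direct_sum_from_source W_rs s12 beta_ge0 beta_lt1 beta_other W_diag_lt1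
    beta_s1_gt0 beta_s2_gt0 b e.
exact: direct_sum_between_agents W_rs s12 beta_ge0 beta_lt1 beta_other W_diag_lt1 e f.
Qed.
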